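(* Let $f:\mathbb{R}^n\to\mathbb{R}$ be convex and $L$-smooth for some $L>0$, and suppose $f$ has a minimizer $x^\star\in\mathbb{R}^n$. Let $\{x^k\}$ be generated by APBM with models $\hat f^k$ satisfying, for every $k\ge1$: (a) $\hat f^k$ is convex; (b) $\hat f^k(x)\ge f(y^k)+\langle\nabla f(y^k),x-y^k\rangle$ for all $x\in\mathbb{R}^n$; (c) $\hat f^k(x)\le f(x)$ for all $x\in\mathbb{R}^n$. Then for every $k\ge0$, $$f(x^k)-f(x^\star)\le\frac{2L\|x^0-x^\star\|^2}{(k+1)^2}.$$
   Context: APBM (accelerated proximal bundle method) for minimizing $f$: given $L>0$ and an initial point $x^0\in\mathbb{R}^n$, set $y^1=x^0$ and $t_1=1$. For $k=1,2,\dots$, given a model $\hat f^k:\mathbb{R}^n\to\mathbb{R}$, set $x^k=\arg\min_{x\in\mathbb{R}^n}\ \hat f^k(x)+\frac{L}{2}\|x-y^k\|^2$, $t_{k+1}=\frac{1+\sqrt{1+4t_k^2}}{2}$, $y^{k+1}=x^k+\frac{t_k-1}{t_{k+1}}(x^k-x^{k-1})$. A differentiable $f$ is $L$-smooth if $\|\nabla f(x)-\nabla f(y)\|\le L\|x-y\|$ for all $x,y\in\mathbb{R}^n$ (Euclidean norm). *)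

From HB Require Import structures.
From mathcomp Require Import all_boot all_order all_algebra.
From mathcomp Require Import all_classical all_reals all_analysis.
Set Implicit Arguments. Unset Strict Implicit. Unset Printing Implicit Defensive.
Import Order.TTheory GRing.Theory Num.Theory.
Import numFieldNormedType.Exports.
Local Open Scope ring_scope.

Section Defs.
Variables (R : realType) (n : nat).

(* Euclidean inner product and norm on R^n (the library norm on 'rV is the max norm). *)
Definition dotv (u v : 'rV[R]_n) : R := \sum_(i < n) u ord0 i * v ord0 i.
Definition enorm (u : 'rV[R]_n) : R := Num.sqrt (dotv u u).

Definition convex_fun (f : 'rV[R]_n -> R) : Prop :=
  forall (x y : 'rV[R]_n) (t : R), 0 <= t -> t <= 1 ->
    f (t *: x + (1 - t) *: y) <= t * f x + (1 - t) * f y.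

Definition is_gradient (f : 'rV[R]_n -> R) (g : 'rV[R]_n -> 'rV[R]_n) : Prop :=
  forall x : 'rV[R]_n, differentiable f x /\ forall v : 'rV[R]_n, 'D_v f x = dotv (g x) v.

Definition L_smooth (L : R) (f : 'rV[R]_n -> R) (g : 'rV[R]_n -> 'rV[R]_n) : Prop :=
  is_gradient f g /\ forall x y, enorm (g x - g y) <= L * enorm (x - y).

Definition APBM (L : R) (fhat : nat -> 'rV[R]_n -> R)
    (x y : nat -> 'rV[R]_n) (t : nat -> R) : Prop :=
  [/\ y 1%N = x 0%N, t 1%N = 1 &
   forall k : nat, (1 <= k)%N ->
     [/\ (forall z, fhat k (x k) + L / 2 * enorm (x k - y k) ^+ 2
                     <= fhat k z + L / 2 * enorm (z - y k) ^+ 2),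
         t k.+1 = (1 + Num.sqrt (1 + 4 * t k ^+ 2)) / 2 &
         y k.+1 = x k + ((t k - 1) / t k.+1) *: (x k - x k.-1)]].

End Defs.

From HB Require Import structures.
From mathcomp Require Import all_boot all_order all_algebra.
From mathcomp Require Import all_classical all_reals all_analysis.
From mathcomp Require Import ring lra.
Import Order.TTheory GRing.Theory Num.Theory.
Import numFieldNormedType.Exports.
Local Open Scope ring_scope.

(* Smoothness of f and the model bounds (b), (c) turn the prox step on the
   model into the inequality
     f(x_k) + L/2 |z - x_k|^2 <= f(z) + L/2 |z - y_k|^2      for all z.
   Evaluated at z = x_k + (x⋆ - x_k) / t_{k+1}, together with the convexity of f
   and t_{k+1}^2 - t_{k+1} = t_k^2, it shows that
     t_k^2 (f(x_k) - f(x⋆)) + L/2 |t_k x_k - (t_k - 1) x_{k-1} - x⋆|^2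
   is nonincreasing, hence at most L/2 |x_0 - x⋆|^2; the rate follows from
   t_k >= (k+1)/2.  For k = 0 the descent lemma suffices, since the gradient
   vanishes at x⋆. *)

Section InnerProduct.
Context {R : realType} {n : nat}.
Implicit Types (a : R) (u v w : 'rV[R]_n).

Lemma dotvC u v : dotv u v = dotv v u.
Proof. by apply: eq_bigr => i _; rewrite mulrC. Qed.

Lemma dotvDl u v w : dotv (u + v) w = dotv u w + dotv v w.
Proof. by rewrite /dotv -big_split; apply: eq_bigr => i _; rewrite mxE mulrDl. Qed.

Lemma dotvZl a u v : dotv (a *: u) v = a * dotv u v.
Proof. by rewrite /dotv mulr_sumr; apply: eq_bigr => i _; rewrite mxE mulrA. Qed.

Lemma dotvNl u v : dotv (- u) v = - dotv u v.
Proof. by rewrite -scaleN1r dotvZl mulN1r. Qed.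

Lemma dotvBl u v w : dotv (u - v) w = dotv u w - dotv v w.
Proof. by rewrite dotvDl dotvNl. Qed.

Lemma dotvDr u v w : dotv w (u + v) = dotv w u + dotv w v.
Proof. by rewrite dotvC dotvDl !(dotvC w). Qed.

Lemma dotvZr a u v : dotv v (a *: u) = a * dotv v u.
Proof. by rewrite dotvC dotvZl dotvC. Qed.

Lemma dotvNr u v : dotv v (- u) = - dotv v u.
Proof. by rewrite dotvC dotvNl dotvC. Qed.

Lemma dotvBr u v w : dotv w (u - v) = dotv w u - dotv w v.
Proof. by rewrite dotvC dotvBl !(dotvC w). Qed.

Lemma dotvv_ge0 u : 0 <= dotv u u.
Proof. by apply: sumr_ge0 => i _; rewrite -expr2 sqr_ge0. Qed.

Lemma enorm_sqr u : enorm u ^+ 2 = dotv u u.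
Proof. by rewrite sqr_sqrtr // dotvv_ge0. Qed.

Lemma dotvvDD u v : dotv (u + v) (u + v) = dotv u u + 2 * dotv u v + dotv v v.
Proof. by rewrite dotvDl !dotvDr (dotvC v u); ring. Qed.

Lemma dotvvBB u v : dotv (u - v) (u - v) = dotv u u - 2 * dotv u v + dotv v v.
Proof. by rewrite dotvBl !dotvBr (dotvC v u); ring. Qed.

Lemma dotvvZZ a u : dotv (a *: u) (a *: u) = a ^+ 2 * dotv u u.
Proof. by rewrite dotvZl dotvZr mulrA -expr2. Qed.

Lemma dotvvNN u : dotv (- u) (- u) = dotv u u.
Proof. by rewrite -scaleN1r dotvvZZ sqrrN expr1n mul1r. Qed.

Lemma dotvv_eq0 u v : dotv u u = 0 -> dotv u v = 0.
Proof.
move=> /eqP; rewrite psumr_eq0 => [/allP u0|i _]; last by rewrite -expr2 sqr_ge0.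
rewrite /dotv big1 // => i _.
have /implyP := u0 i (mem_index_enum _); rewrite mulf_eq0 orbb => /(_ isT) /eqP->.
by rewrite mul0r.
Qed.

(* Expanding [0 <= |w - c d|^2] *)
Lemma dotv_le_of_dotvv_le (c : R) w d : 0 < c ->
  dotv w w <= c ^+ 2 * dotv d d -> dotv w d <= c * dotv d d.
Proof.
move=> c0 wd; have := dotvv_ge0 (w - c *: d).
rewrite dotvvBB dotvZr dotvvZZ => h.
by rewrite -(ler_pM2l c0); nra.
Qed.

End InnerProduct.

Section Descent.
Context {R : realType} {n : nat}.
Local Open Scope classical_set_scope.
Implicit Types (f : 'rV[R]_n -> R) (g : 'rV[R]_n -> 'rV[R]_n).

Lemma is_derive_along_line {f g} (a d : 'rV[R]_n) (s : R) : is_gradient f g ->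
  is_derive s (1 : R) (fun r : R => f (r *: d + a)) (dotv (g (s *: d + a)) d).
Proof.
move=> /(_ (s *: d + a)) [df Dv].
have shiftE : (fun h : R => h^-1 *: (((fun r => f (r *: d + a)) \o shift s) (h *: 1)
                 - f (s *: d + a))) =
              (fun h : R => h^-1 *: ((f \o shift (s *: d + a)) (h *: d) - f (s *: d + a))).
  apply/funext => h /=; congr (_ *: (f _ - _)).
  rewrite /= scalerDl addrA; congr (_ *: _ + _ + _); exact: mulr1.
have dv : derivable f (s *: d + a) d by exact: diff_derivable.
by split; rewrite /derivable /derive shiftE // -Dv.
Qed.

Lemma L_smooth_dotv_grad_le {L f g} (a d : 'rV[R]_n) (s : R) : 0 < L -> 0 < s ->
  L_smooth L f g -> dotv (g (s *: d + a) - g a) d <= L * s * dotv d d.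
Proof.
move=> L0 s0 [_ lip]; apply: dotv_le_of_dotvv_le; first exact: mulr_gt0.
rewrite exprMn -mulrA -dotvvZZ -!enorm_sqr -exprMn.
have := lip (s *: d + a) a; rewrite addrK => h.
by apply: lerXn2r; rewrite ?nnegrE ?mulr_ge0 ?sqrtr_ge0 // ltW.
Qed.

(* Apply the mean value inequality to [r |-> f (a + r d) - r <g a, d> - r^2 L/2 |d|^2] on [0, 1]. *)
Lemma L_smooth_descent {L f g} (a d : 'rV[R]_n) : 0 < L -> L_smooth L f g ->
  f (a + d) <= f a + dotv (g a) d + L / 2 * dotv d d.
Proof.
move=> L0 Hs; have [Hg _] := Hs.
set c := dotv (g a) d; set q := dotv d d.
pose psi := (fun r : R => f (r *: d + a)) - (fun r : R => c * r + L / 2 * q * (r * r)).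
have Dpsi (s : R) : is_derive s (1 : R) psi (dotv (g (s *: d + a)) d - (c + L / 2 * q * (2 * s))).
  apply: is_deriveB; first exact: is_derive_along_line.
  apply: is_derive_eq.
  by change (c * 1 + L / 2 * q * (s * 1 + s * 1) = c + L / 2 * q * (2 * s)); ring.
have psi'_le0 (s : R) : s \in `]0, 1[%R -> derive1 psi s <= 0.
  rewrite in_itv /= => /andP [s0 _]; rewrite derive1E (@derive_val _ _ _ _ _ _ _ (Dpsi s)).
  by have := L_smooth_dotv_grad_le a d s L0 s0 Hs; rewrite dotvBl -/c -/q; lra.
have psi_cont : {within `[0, 1], continuous psi}.
  by apply: derivable_within_continuous => s _; exact: (@ex_derive _ _ _ _ _ _ _ (Dpsi s)).
have : psi 1 <= psi 0.
  apply: (ler0_derive1_le_cc (fun s _ => @ex_derive _ _ _ _ _ _ _ (Dpsi s)) psi'_le0 psi_cont);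
    by rewrite // in_itv /= ?lexx ?ler01.
rewrite /psi !fctE scale1r scale0r add0r !mulr0 !mulr1 addr0 subr0 [a + d]addrC.
lra.
Qed.

Lemma dotv_grad_min {L f g} (xstar v : 'rV[R]_n) : 0 < L -> L_smooth L f g ->
  (forall z, f xstar <= f z) -> dotv (g xstar) v = 0.
Proof.
move=> L0 Hs hmin; apply: dotvv_eq0; apply/eqP; rewrite eq_le dotvv_ge0 andbT.
set G := dotv (g xstar) (g xstar).
have := L_smooth_descent xstar (- L^-1 *: g xstar) L0 Hs.
have := hmin (xstar - L^-1 *: g xstar).
rewrite scaleNr dotvNr dotvZr dotvvNN dotvvZZ -/G => h1 h2.
have : 0 <= - (L^-1 * G) + L / 2 * (L^-1 ^+ 2 * G) by lra.
have -> : - (L^-1 * G) + L / 2 * (L^-1 ^+ 2 * G) = - (2 * L)^-1 * G.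
  by field; rewrite gt_eqF.
by rewrite mulNr oppr_ge0 pmulr_rle0 // invr_gt0 mulr_gt0.
Qed.

End Descent.

Section Prox.
Context {R : realType} {n : nat}.
Implicit Types (h : 'rV[R]_n -> R) (L : R) (x y z : 'rV[R]_n).

Definition is_prox h L y x :=
  forall z, h x + L / 2 * enorm (x - y) ^+ 2 <= h z + L / 2 * enorm (z - y) ^+ 2.

Lemma ge0_of_ge0_perturbation (A B : R) : 0 <= B ->
  (forall s, 0 < s -> s <= 1 -> 0 <= A + s * B) -> 0 <= A.
Proof.
move=> B0 H; case: (leP 0 A) => // A0.
have BA : 0 < B - A by lra.
set s := - A / (B - A).
have sBA : s * (B - A) = - A by rewrite /s mulfVK // gt_eqF.
have s0 : 0 < s by rewrite /s divr_gt0 // oppr_gt0.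
have s1 : s <= 1 by rewrite /s ler_pdivrMr // mul1r; lra.
by have := H s s0 s1; nra.
Qed.

(* Compare [x] with [x + s (z - x)] and let [s -> 0]. *)
Lemma prox_optimality {h L y x} z : 0 <= L -> convex_fun h -> is_prox h L y x ->
  0 <= h z - h x + L * dotv (x - y) (z - x).
Proof.
move=> L0 hconv xprox.
apply: (@ge0_of_ge0_perturbation _ (L / 2 * dotv (z - x) (z - x))).
  by rewrite mulr_ge0 ?dotvv_ge0 ?divr_ge0.
move=> s s0 s1; have := xprox (s *: z + (1 - s) *: x).
have -> : s *: z + (1 - s) *: x - y = (x - y) + s *: (z - x).
  by apply/rowP => i; rewrite !mxE; ring.
rewrite !enorm_sqr (dotvvDD (x - y)) dotvvZZ dotvZr => hs.
have := hconv z x s (ltW s0) s1 => hc.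
by rewrite -(pmulr_rge0 _ s0); nra.
Qed.

Lemma prox_three_point {h L y x} z : 0 <= L -> convex_fun h -> is_prox h L y x ->
  h x + L / 2 * dotv (x - y) (x - y) + L / 2 * dotv (z - x) (z - x)
    <= h z + L / 2 * dotv (z - y) (z - y).
Proof.
move=> L0 hconv xprox; have := prox_optimality z L0 hconv xprox.
have -> : z - y = (z - x) + (x - y) by rewrite addrA subrK.
by rewrite (dotvvDD (z - x)) (dotvC (z - x)); lra.
Qed.

End Prox.

Definition nesterov_next {R : rcfType} (T : R) : R :=
  (1 + Num.sqrt (1 + 4 * T ^+ 2)) / 2.

Section NesterovStep.
Context {R : rcfType} (T : R).

Lemma nesterov_nextE : nesterov_next T ^+ 2 - nesterov_next T = T ^+ 2.
Proof.
rewrite /nesterov_next; set r := Num.sqrt _.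
have r2 : r ^+ 2 = 1 + 4 * T ^+ 2 by rewrite sqr_sqrtr // addr_ge0 // mulr_ge0 // sqr_ge0.
have -> : ((1 + r) / 2) ^+ 2 - (1 + r) / 2 = (r ^+ 2 - 1) / 4 by field.
by rewrite r2; field.
Qed.

Lemma nesterov_next_ge : T + 1 / 2 <= nesterov_next T.
Proof.
rewrite /nesterov_next; set r := Num.sqrt _.
have : 2 * T <= r.
  apply: (le_trans (ler_norm _)); rewrite -sqrtr_sqr /r ler_sqrt.
    by rewrite exprMn; lra.
  by rewrite addr_ge0 // mulr_ge0 // sqr_ge0.
by lra.
Qed.

End NesterovStep.

Section APBM.
Context {R : realType} {n : nat}.
Variables (L : R) (f : 'rV[R]_n -> R) (g : 'rV[R]_n -> 'rV[R]_n) (xstar : 'rV[R]_n)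
  (fhat : nat -> 'rV[R]_n -> R) (x y : nat -> 'rV[R]_n) (t : nat -> R).
Hypotheses (L_gt0 : 0 < L) (f_convex : convex_fun f) (f_smooth : L_smooth L f g)
  (xstar_min : forall z, f xstar <= f z) (apbm : APBM L fhat x y t)
  (models : forall k, (1 <= k)%N ->
     [/\ convex_fun (fhat k),
         (forall z, f (y k) + dotv (g (y k)) (z - y k) <= fhat k z) &
         (forall z, fhat k z <= f z)]).

Lemma apbm_t_lb m : (m.+2)%:R / 2 <= t m.+1.
Proof.
have [_ t1 step] := apbm; elim: m => [|m IH]; first by rewrite t1; lra.
have [_ -> _] := step m.+1 isT; apply: le_trans (nesterov_next_ge _).
by rewrite -[m.+3]addn1 natrD; lra.
Qed.

Lemma apbm_t_ge1 m : 1 <= t m.+1.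
Proof. by apply: le_trans (apbm_t_lb m); rewrite ler_pdivlMr // mul1r ler_nat. Qed.

Lemma apbm_step k z : (1 <= k)%N ->
  f (x k) + L / 2 * dotv (z - x k) (z - x k) <= f z + L / 2 * dotv (z - y k) (z - y k).
Proof.
move=> k1; have [_ _ /(_ k k1) [xprox _ _]] := apbm.
have [fhat_convex fhat_lb fhat_ub] := models k k1.
have descent := L_smooth_descent (y k) (x k - y k) L_gt0 f_smooth.
rewrite addrC subrK in descent.
have := prox_three_point z (ltW L_gt0) fhat_convex xprox.
by have := fhat_lb (x k); have := fhat_ub z; lra.
Qed.

Let u k := t k *: x k - (t k - 1) *: x k.-1 - xstar.
Let lyapunov k := t k ^+ 2 * (f (x k) - f xstar) + L / 2 * dotv (u k) (u k).

Lemma lyapunov1 : lyapunov 1 <= L / 2 * dotv (x 0 - xstar) (x 0 - xstar).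
Proof.
have [y1 t1 _] := apbm; have := apbm_step 1 xstar isT.
rewrite /lyapunov /u y1 t1 subrr scale0r subr0 scale1r expr1n mul1r.
by rewrite -(opprB (x 1%N)) -(opprB (x 0%N)) !dotvvNN; lra.
Qed.

Lemma lyapunov_step m : lyapunov m.+2 <= lyapunov m.+1.
Proof.
have [_ _ /(_ m.+1 isT) [_ ttE yE]] := apbm.
set T := t m.+1 in ttE yE *; set tt := t m.+2 in ttE yE *.
have tt_sqr : tt ^+ 2 - tt = T ^+ 2 by rewrite ttE nesterov_nextE.
have tt_gt0 : 0 < tt by apply: lt_le_trans (apbm_t_ge1 m.+1).
have tt_inv_ge0 : 0 <= tt^-1 by rewrite invr_ge0 ltW.
have tt_inv_le1 : tt^-1 <= 1 by rewrite invr_le1 ?unitf_gt0 // apbm_t_ge1.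
pose w := tt^-1 *: xstar + (1 - tt^-1) *: x m.+1.
have wy : w - y m.+2 = - tt^-1 *: u m.+1.
  by rewrite yE /w /u -/T; apply/rowP => i; rewrite !mxE; field; rewrite gt_eqF.
have wx : w - x m.+2 = - tt^-1 *: u m.+2.
  by rewrite /w /u -/tt; apply/rowP => i; rewrite !mxE; field; rewrite gt_eqF.
have := apbm_step m.+2 w isT; rewrite wy wx !dotvvZZ sqrrN.
have := f_convex xstar (x m.+1) tt^-1 tt_inv_ge0 tt_inv_le1; rewrite -/w.
rewrite /lyapunov -/tt -/T -tt_sqr.
set F2 := f (x m.+2); set F1 := f (x m.+1); set fs := f xstar; set fw := f w.
set U2 := dotv (u m.+2) _; set U1 := dotv (u m.+1) _ => cvx step.
have key : tt ^+ 2 * F2 + L / 2 * U2 <= tt * fs + (tt ^+ 2 - tt) * F1 + L / 2 * U1.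
  have := ler_wpM2l (ltW (exprn_gt0 2 tt_gt0)) (le_trans step (lerD cvx (lexx _))).
  have E1 : tt ^+ 2 * (F2 + L / 2 * (tt^-1 ^+ 2 * U2)) = tt ^+ 2 * F2 + L / 2 * U2.
    by field; rewrite gt_eqF.
  have E2 : tt ^+ 2 * (tt^-1 * fs + (1 - tt^-1) * F1 + L / 2 * (tt^-1 ^+ 2 * U1))
            = tt * fs + (tt ^+ 2 - tt) * F1 + L / 2 * U1.
    by field; rewrite gt_eqF.
  by rewrite E1 E2.
by lra.
Qed.

Lemma lyapunov_le m : lyapunov m.+1 <= L / 2 * dotv (x 0 - xstar) (x 0 - xstar).
Proof.
elim: m => [|m IH]; first exact: lyapunov1.
exact: le_trans (lyapunov_step m) IH.
Qed.

Lemma apbm_rate0 : f (x 0) - f xstar <= 2 * L * enorm (x 0 - xstar) ^+ 2 / 1%:R ^+ 2.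
Proof.
have := L_smooth_descent xstar (x 0 - xstar) L_gt0 f_smooth.
rewrite addrC subrK (dotv_grad_min _ _ L_gt0 f_smooth xstar_min) addr0.
rewrite expr1n divr1 enorm_sqr.
by have := mulr_ge0 (ltW L_gt0) (dotvv_ge0 (x 0 - xstar)); lra.
Qed.

Lemma apbm_rate_succ m :
  f (x m.+1) - f xstar <= 2 * L * enorm (x 0 - xstar) ^+ 2 / (m.+2)%:R ^+ 2.
Proof.
have := lyapunov_le m; rewrite /lyapunov enorm_sqr.
have := mulr_ge0 (ltW L_gt0) (dotvv_ge0 (u m.+1)).
have := mulr_ge0 (ltW L_gt0) (dotvv_ge0 (x 0 - xstar)); have := apbm_t_lb m.
set T := t m.+1; set K := (m.+2)%:R; set D := f _ - f _; set C := dotv (x 0 - _) _.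
move=> TK LC_ge0 Lu_ge0 lyap.
have K_gt0 : 0 < K by rewrite ltr0n.
have TD : T ^+ 2 * D <= L / 2 * C by lra.
rewrite ler_pdivlMr ?exprn_gt0 //.
have [D_le0|D_gt0] := leP D 0.
  by have := mulr_le0_ge0 D_le0 (sqr_ge0 K); lra.
have KT : K ^+ 2 <= 4 * T ^+ 2 by nra.
by have := ler_wpM2l (ltW D_gt0) KT; lra.
Qed.

End APBM.

Theorem corollary1 (R : realType) (n : nat) (L : R) (f : 'rV[R]_n -> R)
    (gradf : 'rV[R]_n -> 'rV[R]_n) (xstar : 'rV[R]_n)
    (fhat : nat -> 'rV[R]_n -> R) (x y : nat -> 'rV[R]_n) (t : nat -> R) :
  0 < L ->
  convex_fun f ->
  L_smooth L f gradf ->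
  (forall z, f xstar <= f z) ->
  APBM L fhat x y t ->
  (forall k : nat, (1 <= k)%N ->
     [/\ convex_fun (fhat k),
         (forall z, f (y k) + dotv (gradf (y k)) (z - y k) <= fhat k z) &
         (forall z, fhat k z <= f z)]) ->
  forall k : nat,
    f (x k) - f xstar <= 2 * L * enorm (x 0%N - xstar) ^+ 2 / (k.+1)%:R ^+ 2.
Proof.
move=> L_gt0 f_convex f_smooth xstar_min apbm models [|m].
  exact: apbm_rate0 L_gt0 f_smooth xstar_min.
exact: apbm_rate_succ L_gt0 f_convex f_smooth apbm models m.
Qed.
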